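(* Let $G=(V,E)$ be an undirected graph with $m$ edges, positive capacities $u_e$, and maximum $s$-$t$ flow value $F^*$. Let $0<\epsilon<1/2$, let $w\in\mathbb{R}^E$ with $w_e>0$ for all $e$, write $|w|_1=\sum_e w_e$, and set $r_e=\frac{1}{u_e^2}\big(w_e+\frac{\epsilon|w|_1}{3m}\big)$. Then: (1) If $0<F\le F^*$ and $\tilde f$ is an $s$-$t$ flow of value $F$ with $\mathcal{E}_r(\tilde f)\le(1+\epsilon/3)\mathcal{E}_r(f)$, where $f$ is the electrical $s$-$t$ flow of value $F$ with respect to $r$, then $\mathcal{E}_r(\tilde f)\le(1+\epsilon)|w|_1$. (2) Every $s$-$t$ flow $g$ with $\mathcal{E}_r(g)\le(1+\epsilon)|w|_1$ satisfies $\sum_e w_e\,\mathrm{cong}_g(e)\le(1+\epsilon)|w|_1$ and $\max_e\mathrm{cong}_g(e)\le 3\sqrt{m/\epsilon}$.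
   Context: Edges are arbitrarily oriented; an $s$-$t$ flow is $f:E\to\mathbb{R}$ conserving flow at all vertices other than $s,t$, with value the net flow out of $s$. $F^*$ is the maximum value of an $s$-$t$ flow with $|f(e)|\le u_e$ for all $e$. $\mathrm{cong}_f(e)=|f(e)|/u_e$. The energy is $\mathcal{E}_r(f)=\sum_e r_e f(e)^2$, and the electrical $s$-$t$ flow of value $F$ is the $s$-$t$ flow of value $F$ minimizing $\mathcal{E}_r$. *)

(* R is an arbitrary real closed field (needed for Num.sqrt). *)
From HB Require Import structures.
From mathcomp Require Import all_boot all_order all_algebra.
Set Implicit Arguments. Unset Strict Implicit. Unset Printing Implicit Defensive.
Import Order.TTheory GRing.Theory Num.Theory.
Local Open Scope ring_scope.

(* A graph on vertex type V with edge type E; each edge e has an arbitrary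
   orientation src e -> dst e (the graph is undirected; multi-edges allowed). *)
Section Flows.
Variables (R : rcfType) (V E : finType) (src dst : E -> V).

Definition net_out (f : E -> R) (v : V) : R :=
  \sum_(e | src e == v) f e - \sum_(e | dst e == v) f e.

Definition is_st_flow (s t : V) (f : E -> R) : Prop :=
  forall v, v != s -> v != t -> net_out f v = 0.

Definition flow_value (s : V) (f : E -> R) : R := net_out f s.

Definition feasible (u : E -> R) (f : E -> R) : Prop :=
  forall e, `|f e| <= u e.

Definition is_max_flow_value (u : E -> R) (s t : V) (Fstar : R) : Prop :=
  (exists f, is_st_flow s t f /\ feasible u f /\ flow_value s f = Fstar) /\
  (forall f, is_st_flow s t f -> feasible u f -> flow_value s f <= Fstar).

Definition cong (u : E -> R) (f : E -> R) (e : E) : R := `|f e| / u e.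

Definition energy (r : E -> R) (f : E -> R) : R := \sum_e r e * f e ^+ 2.

Definition is_electrical_flow (r : E -> R) (s t : V) (F : R) (f : E -> R) : Prop :=
  is_st_flow s t f /\ flow_value s f = F /\
  (forall g, is_st_flow s t g -> flow_value s g = F -> energy r f <= energy r g).

End Flows.

From HB Require Import structures.
From mathcomp Require Import all_boot all_order all_algebra.
From mathcomp Require Import ring lra.
Set Implicit Arguments. Unset Strict Implicit. Unset Printing Implicit Defensive.
Import Order.TTheory GRing.Theory Num.Theory.
Local Open Scope ring_scope.

(* Scaling a maximum flow down to value F gives a feasible flow of value F, so
   the electrical flow of value F has energy at most sum_e r_e u_e^2, which the
   choice of r makes (1 + eps/3)|w|_1; a (1 + eps/3)-approximate flow therefore
   has energy at most (1 + eps/3)^2 |w|_1 <= (1 + eps)|w|_1.  Conversely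
   r_e g_e^2 = (w_e + eps|w|_1/(3m)) cong_g(e)^2, so a flow of small energy has
   small weighted squared congestion: AM-GM bounds the weighted congestion, and
   the uniform part eps|w|_1/(3m) of r bounds every single congestion. *)

Section ElectricalFlows.
Variables (R : rcfType) (V E : finType) (src dst : E -> V).
Implicit Types (r u f g : E -> R) (s t : V).

Lemma net_outZ (k : R) f v :
  net_out src dst (fun e => k * f e) v = k * net_out src dst f v.
Proof. by rewrite /net_out mulrBr !mulr_sumr. Qed.

Lemma st_flowZ s t (k : R) f :
  is_st_flow src dst s t f -> is_st_flow src dst s t (fun e => k * f e).
Proof. by move=> f_flow v vs vt; rewrite net_outZ f_flow // mulr0. Qed.

Lemma flow_valueZ s (k : R) f :
  flow_value src dst s (fun e => k * f e) = k * flow_value src dst s f.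
Proof. exact: net_outZ. Qed.

Lemma feasibleZ u (k : R) f :
  0 <= k <= 1 -> feasible u f -> feasible u (fun e => k * f e).
Proof.
case/andP=> k_ge0 k_le1 f_feas e; rewrite normrM ger0_norm //.
by rewrite (le_trans _ (f_feas e)) // ler_piMl.
Qed.

Lemma feasible_flow_of_value u s t Fstar (F : R) :
  is_max_flow_value src dst u s t Fstar -> 0 < F <= Fstar ->
  exists g, [/\ is_st_flow src dst s t g, feasible u g & flow_value src dst s g = F].
Proof.
move=> [[f [f_flow [f_feas f_val]]] _] /andP[F_gt0 F_le].
have Fstar_gt0 : 0 < Fstar := lt_le_trans F_gt0 F_le.
exists (fun e => F / Fstar * f e); split.
- exact: st_flowZ.
- apply: feasibleZ => //; apply/andP; split; first by rewrite divr_ge0 ?ltW.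
  by rewrite ler_pdivrMr // mul1r.
- by rewrite (flow_valueZ s _ f) f_val divfK // gt_eqF.
Qed.

Lemma energy_feasible_le r u f :
  (forall e, 0 <= r e) -> feasible u f -> energy r f <= \sum_e r e * u e ^+ 2.
Proof.
move=> r_ge0 f_feas; apply: ler_sum => e _; rewrite ler_wpM2l //.
rewrite -real_normK ?num_real // -[u e ^+ 2]real_normK ?num_real //.
by rewrite lerXn2r ?nnegrE ?normr_ge0 // (le_trans (f_feas e)) ?ler_norm.
Qed.

Lemma electrical_energy_le r u s t Fstar (F : R) f :
  (forall e, 0 <= r e) -> is_max_flow_value src dst u s t Fstar ->
  0 < F <= Fstar -> is_electrical_flow src dst r s t F f ->
  energy r f <= \sum_e r e * u e ^+ 2.
Proof.
move=> r_ge0 maxF F_range [_ [_ f_min]].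
have [g [g_flow g_feas g_val]] := feasible_flow_of_value maxF F_range.
exact: le_trans (f_min g g_flow g_val) (energy_feasible_le r_ge0 g_feas).
Qed.

Lemma cong_ge0 u f e : 0 <= u e -> 0 <= cong u f e.
Proof. by move=> ue_ge0; rewrite divr_ge0. Qed.

Lemma energy_cong r u f :
  (forall e, u e != 0) -> energy r f = \sum_e r e * u e ^+ 2 * cong u f e ^+ 2.
Proof.
move=> u_neq0; apply: eq_bigr => e _.
rewrite /cong expr_div_n real_normK ?num_real //; field; exact: u_neq0.
Qed.

End ElectricalFlows.

Lemma sqr1D_le (R : realFieldType) (x : R) :
  0 <= x -> x <= 1 -> (1 + x) ^+ 2 <= 1 + 3 * x.
Proof.
move=> x_ge0 x_le1; have x1_ge0 : 0 <= 1 - x by rewrite subr_ge0.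
have := mulr_ge0 x_ge0 x1_ge0; nra.
Qed.

Lemma le_approx_trans (R : realFieldType) (x a b c : R) :
  0 <= x -> x <= 1 -> 0 <= c ->
  a <= (1 + x) * b -> b <= (1 + x) * c -> a <= (1 + 3 * x) * c.
Proof.
move=> x_ge0 x_le1 c_ge0 ab bc; apply: (le_trans ab).
apply: (le_trans (y := (1 + x) ^+ 2 * c)); last by rewrite ler_wpM2r ?sqr1D_le.
by rewrite expr2 -mulrA ler_wpM2l //; lra.
Qed.

Section WeightedSums.
Variables (R : realFieldType) (I : finType) (w : I -> R).
Hypothesis w_ge0 : forall i, 0 <= w i.

(* Also true for empty [I], where the division by [#|I| = 0] yields [0]. *)
Lemma sum_uniform_share (eps : R) :
  \sum_i (w i + eps * (\sum_j w j) / (3 * #|I|%:R)) = (1 + eps / 3) * \sum_j w j.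
Proof.
rewrite big_split /= sumr_const.
have [I0 | I_gt0] := posnP #|I|.
  rewrite I0 mulr0n addr0 big_pred0 ?mulr0 // => i.
  by have := card0_eq I0 i; rewrite !inE.
rewrite -[_ *+ _]mulr_natr -/#|I|; field.
by rewrite pnatr_eq0 -lt0n.
Qed.

Lemma weighted_sum_le_sqr (c : I -> R) :
  (\sum_i w i * c i) *+ 2 <= \sum_i w i + \sum_i w i * c i ^+ 2.
Proof.
rewrite -sumrMnl -big_split /=; apply: ler_sum => i _.
have := mulr_ge0 (w_ge0 i) (sqr_ge0 (c i - 1)); nra.
Qed.

Lemma weighted_sum_le_of_sqr (a k : R) (c : I -> R) :
  0 <= a -> 1 <= k -> \sum_i (w i + a) * c i ^+ 2 <= k * \sum_i w i ->
  \sum_i w i * c i <= k * \sum_i w i.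
Proof.
move=> a_ge0 k_ge1 c_sqr.
have w_c_sqr : \sum_i w i * c i ^+ 2 <= \sum_i (w i + a) * c i ^+ 2.
  by apply: ler_sum => i _; rewrite ler_wpM2r ?sqr_ge0 ?lerDl.
have W_ge0 : 0 <= \sum_i w i by apply: sumr_ge0.
have k1_ge0 : 0 <= k - 1 by rewrite subr_ge0.
have := weighted_sum_le_sqr c; have := mulr_ge0 k1_ge0 W_ge0.
rewrite mulr2n; lra.
Qed.

Lemma uniform_term_le (a K : R) (c : I -> R) j :
  0 <= a -> \sum_i (w i + a) * c i ^+ 2 <= K -> a * c j ^+ 2 <= K.
Proof.
move=> a_ge0; apply: le_trans.
apply: (le_trans (y := (w j + a) * c j ^+ 2)); first by rewrite ler_wpM2r ?sqr_ge0 ?lerDr.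
rewrite (bigD1 j) //= lerDl sumr_ge0 // => i _.
by rewrite mulr_ge0 ?sqr_ge0 ?addr_ge0.
Qed.

End WeightedSums.

Lemma ler_mul_sqrt (R : rcfType) (c k x : R) :
  0 <= c -> 0 <= k -> 0 <= x -> c ^+ 2 <= k ^+ 2 * x -> c <= k * Num.sqrt x.
Proof.
move=> c_ge0 k_ge0 x_ge0 c2_le.
rewrite -ler_sqr ?nnegrE ?mulr_ge0 ?sqrtr_ge0 //.
by rewrite exprMn sqr_sqrtr.
Qed.

Theorem mainTheorem9 (R : rcfType) (V E : finType) (src dst : E -> V)
  (s t : V) (u w : E -> R) (Fstar eps : R) :
  s != t ->
  (forall e, 0 < u e) ->
  is_max_flow_value src dst u s t Fstar ->
  0 < eps -> eps < 1 / 2 ->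
  (forall e, 0 < w e) ->
  let m := #|E| in
  let w1 := \sum_e w e in
  let r := fun e => (w e + eps * w1 / (3 * m%:R)) / (u e ^+ 2) in
  (forall (F : R) (f ft : E -> R),
      0 < F -> F <= Fstar ->
      is_electrical_flow src dst r s t F f ->
      is_st_flow src dst s t ft -> flow_value src dst s ft = F ->
      energy r ft <= (1 + eps / 3) * energy r f ->
      energy r ft <= (1 + eps) * w1)
  /\
  (forall g : E -> R,
      is_st_flow src dst s t g ->
      energy r g <= (1 + eps) * w1 ->
      \sum_e w e * cong u g e <= (1 + eps) * w1 /\
      \big[Num.max/0]_e cong u g e <= 3 * Num.sqrt (m%:R / eps)).
Proof.
move=> _ u_gt0 maxF eps_gt0 eps_lt w_gt0 m w1 r.
set a := eps * w1 / (3 * m%:R).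
have w_ge0 e : 0 <= w e := ltW (w_gt0 e).
have a_ge0 : 0 <= a by rewrite /a divr_ge0 ?mulr_ge0 ?sumr_ge0 ?ler0n // ltW.
have ru e : r e * u e ^+ 2 = w e + a by rewrite divfK // expf_neq0 // gt_eqF.
have r_ge0 e : 0 <= r e by rewrite divr_ge0 ?sqr_ge0 ?addr_ge0.
have w1_ge0 : 0 <= w1 by apply: sumr_ge0.
split=> [F f ft F_gt0 F_le f_el _ _ ft_approx | g _ g_energy].
  have F_range : 0 < F <= Fstar by apply/andP.
  have f_energy : energy r f <= (1 + eps / 3) * w1.
    apply: le_trans (electrical_energy_le r_ge0 maxF F_range f_el) _.
    by under eq_bigr do rewrite ru; rewrite /a sum_uniform_share.
  have := le_approx_trans _ _ w1_ge0 ft_approx f_energy.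
  by rewrite [3 * _]mulrC divfK ?pnatr_eq0 //; apply; lra.
have cong_energy : \sum_e (w e + a) * cong u g e ^+ 2 <= (1 + eps) * w1.
  by under eq_bigr do rewrite -ru; rewrite -energy_cong // => e; rewrite gt_eqF.
split; first by apply: weighted_sum_le_of_sqr cong_energy => //; lra.
apply: bigmax_le => [|e _]; first by rewrite mulr_ge0 ?sqrtr_ge0.
have m_gt0 : 0 < m%:R :> R by rewrite ltr0n; apply/card_gt0P; exists e.
have w1_gt0 : 0 < w1 by rewrite /w1 (bigD1 e) //= ltr_pwDl ?sumr_ge0.
apply: ler_mul_sqrt => //; first exact: cong_ge0 (ltW (u_gt0 e)).
  by rewrite divr_ge0 // ltW.
have := uniform_term_le w_ge0 e a_ge0 cong_energy.
rewrite /a mulrAC ler_pdivrMr ?mulr_gt0 // => term_le.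
rewrite mulrA ler_pdivlMr // -(ler_pM2r w1_gt0).
have eps2_ge0 : 0 <= 2 - eps by lra.
have := mulr_ge0 eps2_ge0 (mulr_ge0 (ltW m_gt0) w1_ge0); lra.
Qed.
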